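(* Let $J$ be an abelian topological semigroup with identity $0$ and $X$ a topological vector space over $\mathbf{C}$. If $\phi\in P^n(J,X)$, then $\phi=\sum_{j=0}^n a_j$ where $a_j\in P^j(J,X)$ and $a_j(mt)=m^j a_j(t)$ for all $m\in\mathbf{Z}_+$ and $t\in J$.
   Context: $\mathbf{Z}_+=\{0,1,2,\dots\}$. A continuous $p:J\to X$ is a polynomial of degree at most $n$ if for all $s,t\in J$ there are $a_0(s,t),\dots,a_n(s,t)\in X$ with $p(s+mt)=\sum_{j=0}^n a_j(s,t)m^j$ for all $m\in\mathbf{Z}_+$; $P^n(J,X)$ is the space of such polynomials. *)

From HB Require Import structures.
From mathcomp Require Import all_boot all_order all_algebra.
From mathcomp Require Import all_classical all_reals all_analysis.
From mathcomp.real_closed Require Import complex.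
Set Implicit Arguments. Unset Strict Implicit. Unset Printing Implicit Defensive.
Import Order.TTheory GRing.Theory Num.Theory.
Import numFieldTopology.Exports.
Local Open Scope ring_scope.

(* J : abelian topological semigroup with identity 0 = TopologicalNmodule
   (commutative monoid, topology, continuous addition); m t := t *+ m. *)

Definition is_poly_le (R : realType) (J : TopologicalNmodule.type)
    (X : topologicalLmodType (complex R)) (n : nat) (p : J -> X) : Prop :=
  continuous p /\
  forall s t : J, exists a : nat -> X,
    forall m : nat, p (s + t *+ m) = \sum_(j < n.+1) ((m%:R : complex R) ^+ j) *: a j.

From mathcomp Require Import all_boot all_order all_algebra.
From mathcomp Require Import all_classical all_reals all_analysis.
From mathcomp.real_closed Require Import complex.
Set Implicit Arguments. Unset Strict Implicit. Unset Printing Implicit Defensive.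
Import Order.TTheory GRing.Theory Num.Theory.
Import numFieldTopology.Exports.
Local Open Scope ring_scope.

(* Let W invert the Vandermonde matrix of the nodes 0, ..., n.  The
   homogeneous part a_j t := sum_q W q j *: phi (t *+ q) is the j-th
   coefficient of m |-> phi (t *+ m); comparing coefficients of
   phi (t *+ (k * m)) gives a_j (t *+ k) = k^j a_j t.  For the degree, write
   a_j (s + t *+ m) = sum_i m^i c_i(s, t).  Then c_i(s, t *+ l) = l^i c_i(s, t)
   and c_i(s *+ l, t *+ l) = l^j c_i(s, t), while l |-> c_i(s *+ l, t) is a
   polynomial of degree <= n; hence l^j c_i(s, t) = l^i P(l), and comparing
   coefficients of l^j kills c_i(s, t) for i > j. *)

Definition vandermonde_rinv (F : fieldType) (N : nat) (W : nat -> nat -> F) :=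
  forall i k, (i < N)%N -> (k < N)%N ->
  \sum_(q < N) (q%:R : F) ^+ k * W q i = (i == k)%:R.

Section NatPoly.
Variables (F : fieldType) (V : lmodType F).

Definition natpoly (N : nat) (c : nat -> V) (m : nat) : V :=
  \sum_(k < N) (m%:R : F) ^+ k *: c k.

Lemma natpoly_monomial N j (x : V) m : (j < N)%N ->
  natpoly N (fun k => if k == j then x else 0) m = (m%:R : F) ^+ j *: x.
Proof.
move=> jN; rewrite /natpoly (bigD1 (Ordinal jN)) //= eqxx big1 ?addr0 // => k.
by rewrite -val_eqE /= => /negbTE ->; rewrite scaler0.
Qed.

Lemma natpoly_shift N i c m :
  (m%:R : F) ^+ i *: natpoly N c m
  = natpoly (i + N) (fun r => if (i <= r)%N then c (r - i)%N else 0) m.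
Proof.
rewrite /natpoly big_split_ord /= [X in _ = X + _]big1 ?add0r => [|r _].
  rewrite scaler_sumr; apply: eq_bigr => k _.
  by rewrite leq_addr addKn scalerA exprD.
by rewrite leqNgt ltn_ord scaler0.
Qed.

Lemma natpoly_trunc N M c m : (N <= M)%N ->
  (forall i, (N <= i < M)%N -> c i = 0) -> natpoly M c m = natpoly N c m.
Proof.
move=> NM c0; rewrite /natpoly -(subnKC NM) big_split_ord /=.
rewrite [X in _ + X]big1 ?addr0 // => i _.
by rewrite c0 ?scaler0 // leq_addr /= -ltn_subRL.
Qed.

Lemma natpoly_lincomb N M (w : nat -> F) (g : nat -> nat -> V) :
  (forall q, exists c, g q =1 natpoly N c) ->
  exists c, (fun m => \sum_(q < M) w q *: g q m) =1 natpoly N c.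
Proof.
move=> /choice[c gc]; exists (fun k => \sum_(q < M) w q *: c q k) => m.
under eq_bigr => q _ do rewrite gc scaler_sumr.
rewrite exchange_big /=; apply: eq_bigr => k _.
by rewrite scaler_sumr; apply: eq_bigr => q _; rewrite !scalerA mulrC.
Qed.

Section Coefficients.
Variables (N : nat) (W : nat -> nat -> F).
Hypothesis W_inv : vandermonde_rinv N W.

Definition natpoly_coef (f : nat -> V) (i : nat) : V := \sum_(q < N) W q i *: f q.

Lemma natpoly_coefE f c : f =1 natpoly N c ->
  forall i, (i < N)%N -> natpoly_coef f i = c i.
Proof.
move=> fc i iN; rewrite /natpoly_coef.
under eq_bigr => q _ do rewrite fc scaler_sumr.
rewrite exchange_big /=.
under eq_bigr => k _ do
  (under eq_bigr => q _ do rewrite scalerA mulrC; rewrite -scaler_suml W_inv //).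
rewrite (bigD1 (Ordinal iN)) //= eqxx scale1r big1 ?addr0 // => k.
by rewrite -val_eqE /= eq_sym => /negbTE ->; rewrite scale0r.
Qed.

Lemma natpolyE f c : f =1 natpoly N c -> f =1 natpoly N (natpoly_coef f).
Proof.
move=> fc m; rewrite fc; apply: eq_bigr => k _.
by rewrite (natpoly_coefE fc).
Qed.

Lemma natpoly_coefZ a f i :
  natpoly_coef (fun m => a *: f m) i = a *: natpoly_coef f i.
Proof.
by rewrite /natpoly_coef scaler_sumr; apply: eq_bigr => q _; rewrite !scalerA mulrC.
Qed.

Lemma natpoly_coefMn (M : nmodType) (g : M -> V) :
  (forall t, exists c, (fun m => g (t *+ m)) =1 natpoly N c) ->
  forall i, (i < N)%N -> forall k t,
  natpoly_coef (fun m => g (t *+ k *+ m)) i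
  = (k%:R : F) ^+ i *: natpoly_coef (fun m => g (t *+ m)) i.
Proof.
move=> gpoly i iN k t; have [c gc] := gpoly t.
rewrite (natpoly_coefE (c := fun i => (k%:R : F) ^+ i *: c i)) ?(natpoly_coefE gc) // => m.
rewrite -mulrnA gc; apply: eq_bigr => j _.
by rewrite natrM exprMn !scalerA mulrC.
Qed.

End Coefficients.
End NatPoly.

Section CharZero.
Variable F : fieldType.
Hypothesis F_char0 : [pchar F] =i pred0.

Lemma vandermonde_rinv_exists N : exists W : nat -> nat -> F, vandermonde_rinv N W.
Proof.
case: N => [|N]; first by exists (fun _ _ => 0).
pose V := Vandermonde N.+1 (\row_(j < N.+1) (j%:R : F)).
have V_unit : V \in unitmx.
  rewrite unitmxE det_Vandermonde unitfE.
  apply/prodf_neq0 => i _; apply/prodf_neq0 => j ij.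
  rewrite !mxE subr_eq0 -subr_eq0 -natrB ?(ltnW ij) //.
  by move/(pcharf0P _).1: F_char0 => ->; rewrite subn_eq0 -ltnNge.
exists (fun q i => if ((q < N.+1) && (i < N.+1))%N then invmx V (inord q) (inord i) else 0).
move=> i k iN kN.
have -> : (i == k) = (inord k == inord i :> 'I_N.+1).
  by rewrite eq_sym -val_eqE /= !inordK.
have := congr1 (fun A : 'M[F]_N.+1 => A (inord k) (inord i)) (mulmxV V_unit).
rewrite !mxE => <-.
by apply: eq_bigr => q _; rewrite !mxE iN ltn_ord inord_val inordK.
Qed.

Lemma natpoly_coef_unique (V : lmodType F) N (c c' : nat -> V) :
  natpoly N c =1 natpoly N c' -> forall i, (i < N)%N -> c i = c' i.
Proof.
move=> cc' i iN; have [W W_inv] := vandermonde_rinv_exists N.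
by rewrite -(natpoly_coefE W_inv (f := natpoly N c) (c := c)) // (natpoly_coefE W_inv cc').
Qed.

End CharZero.

Section Continuity.
Variable T : topologicalType.

Lemma nmod_continuousD (M : TopologicalNmodule.type) (f g : T -> M) :
  continuous f -> continuous g -> continuous (fun x => f x + g x).
Proof.
move=> cf cg x.
apply: (@continuous_comp _ _ _ (fun x => (f x, g x)) (fun z : M * M => z.1 + z.2)).
  by apply: cvg_pair; [exact: cf | exact: cg].
exact: add_continuous.
Qed.

Lemma nmod_continuous_sum (M : TopologicalNmodule.type) K (f : nat -> T -> M) :
  (forall q, continuous (f q)) -> continuous (fun x => \sum_(q < K) f q x).
Proof.
move=> cf; elim: K => [|K IH].
  under eq_fun => x do rewrite big_ord0.
  exact: cst_continuous.
under eq_fun => x do rewrite big_ord_recr /=.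
exact: nmod_continuousD.
Qed.

Lemma lmod_continuousZ (C : numDomainType) (X : topologicalLmodType C) (a : C) (f : T -> X) :
  continuous f -> continuous (fun x => a *: f x).
Proof.
move=> cf x.
apply: (@continuous_comp _ _ _ (fun x => ((a : C^o), f x)) (fun z : C^o * X => z.1 *: z.2)).
  by apply: (@cvg_pair _ _ _ _ (nbhs (a : C^o))); [exact: cvg_cst | exact: cf].
exact: scale_continuous.
Qed.

End Continuity.

Lemma natmul_continuous (M : TopologicalNmodule.type) n : continuous (fun x : M => x *+ n).
Proof.
elim: n => [|n IH].
  under eq_fun => x do rewrite mulr0n.
  exact: cst_continuous.
under eq_fun => x do rewrite mulrS.
by apply: nmod_continuousD => // x; apply: cvg_id.
Qed.

Lemma is_poly_le_lincomb (R : realType) (J : TopologicalNmodule.type)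
    (X : topologicalLmodType (complex R)) n (phi : J -> X) (w : nat -> complex R) K :
  is_poly_le n phi -> is_poly_le n (fun t => \sum_(q < K) w q *: phi (t *+ q)).
Proof.
move=> [phi_cont phi_poly]; split.
  apply: (nmod_continuous_sum (f := fun q t => w q *: phi (t *+ q))) => q.
  apply: lmod_continuousZ => t.
  exact: (continuous_comp (@natmul_continuous _ q t) (phi_cont _)).
move=> s t; apply: (@natpoly_lincomb _ _ _ K w (fun q m => phi ((s + t *+ m) *+ q))) => q.
have [a phi_a] := phi_poly (s *+ q) (t *+ q).
by exists a => m; rewrite mulrnDl mulrnAC phi_a.
Qed.

Section HomogeneousParts.
Variables (R : realType) (J : TopologicalNmodule.type) (X : topologicalLmodType (complex R)).
Variables (n : nat) (phi : J -> X).
Hypothesis phi_poly : is_poly_le n phi.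
Variable W : nat -> nat -> complex R.
Hypothesis W_inv : vandermonde_rinv n.+1 W.

Local Notation coef := (natpoly_coef n.+1 W).

Definition homog_part (j : nat) (t : J) : X := coef (fun m => phi (t *+ m)) j.

Lemma phi_natmul_natpoly t : (fun m => phi (t *+ m)) =1 natpoly n.+1 (homog_part^~ t).
Proof.
have [a phi_a] := phi_poly.2 0 t.
by apply: (natpolyE W_inv (c := a)) => m; rewrite /natpoly -phi_a add0r.
Qed.

Lemma homog_partMn j : (j < n.+1)%N ->
  forall k t, homog_part j (t *+ k) = (k%:R : complex R) ^+ j *: homog_part j t.
Proof.
move=> j_lt k t; apply: (natpoly_coefMn W_inv (g := phi)) => // u.
by eexists; apply: phi_natmul_natpoly.
Qed.

Lemma homog_part_poly_le_n j : is_poly_le n (homog_part j).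
Proof. exact: (is_poly_le_lincomb (W^~ j) n.+1 phi_poly). Qed.

Lemma sum_homog_part t : phi t = \sum_(j < n.+1) homog_part j t.
Proof.
rewrite -[t]mulr1n phi_natmul_natpoly /natpoly.
by apply: eq_bigr => j _; rewrite expr1n scale1r mulr1n.
Qed.

Section Degree.
Variable j : nat.
Hypothesis j_le_n : (j <= n)%N.

Definition homog_part_coef (i : nat) (u v : J) : X :=
  coef (fun m => homog_part j (u + v *+ m)) i.

Lemma homog_part_natpoly u v :
  (fun m => homog_part j (u + v *+ m)) =1 natpoly n.+1 (fun i => homog_part_coef i u v).
Proof.
have [c hc] := (homog_part_poly_le_n j).2 u v.
exact: (natpolyE W_inv (c := c)).
Qed.

Lemma homog_part_coefMr i u v l : (i < n.+1)%N ->
  homog_part_coef i u (v *+ l) = (l%:R : complex R) ^+ i *: homog_part_coef i u v.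
Proof.
move=> i_lt; apply: (natpoly_coefMn W_inv (g := fun v => homog_part j (u + v))) => // w.
by eexists; apply: homog_part_natpoly.
Qed.

Lemma homog_part_coefMn i u v l :
  homog_part_coef i (u *+ l) (v *+ l) = (l%:R : complex R) ^+ j *: homog_part_coef i u v.
Proof.
rewrite -natpoly_coefZ /homog_part_coef /natpoly_coef; apply: eq_bigr => q _.
by rewrite -mulrnAC -mulrnDl homog_partMn.
Qed.

Lemma homog_part_coef_natpolyl i u v :
  exists e, (fun l => homog_part_coef i (u *+ l) v) =1 natpoly n.+1 e.
Proof.
apply: (@natpoly_lincomb _ _ _ n.+1 (W^~ i) (fun q l => homog_part j (u *+ l + v *+ q))) => q.
have [a ha] := (homog_part_poly_le_n j).2 (v *+ q) u.
by exists a => l; rewrite addrC ha.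
Qed.

Lemma homog_part_coef_eq0 i u v : (j < i < n.+1)%N -> homog_part_coef i u v = 0.
Proof.
case/andP=> ji i_lt; have [e he] := homog_part_coef_natpolyl i u v.
have j_lt : (j < i + n.+1)%N by rewrite (leq_trans ji) ?leq_addr.
suff: natpoly (i + n.+1) (fun r => if r == j then homog_part_coef i u v else 0)
    =1 natpoly (i + n.+1) (fun r => if (i <= r)%N then e (r - i)%N else 0).
  by move/natpoly_coef_unique => /(_ (pchar_num _) j j_lt); rewrite eqxx leqNgt ji.
move=> l; rewrite natpoly_monomial // -natpoly_shift -he.
by rewrite -homog_part_coefMn homog_part_coefMr.
Qed.

Lemma homog_part_poly_le : is_poly_le j (homog_part j).
Proof.
split=> [|s t]; first exact: (homog_part_poly_le_n j).1.
exists (fun i => homog_part_coef i s t) => m.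
rewrite homog_part_natpoly (@natpoly_trunc _ _ j.+1 n.+1) // => i.
exact: homog_part_coef_eq0.
Qed.

End Degree.
End HomogeneousParts.

Theorem proposition2p3 (R : realType) (J : TopologicalNmodule.type)
    (X : topologicalLmodType (complex R)) (n : nat) (phi : J -> X) :
  is_poly_le n phi ->
  exists a : nat -> J -> X,
    (forall j : nat, (j <= n)%N ->
       is_poly_le j (a j) /\
       forall (m : nat) (t : J), a j (t *+ m) = ((m%:R : complex R) ^+ j) *: a j t) /\
    (forall t : J, phi t = \sum_(j < n.+1) a j t).
Proof.
move=> phi_poly; have [W W_inv] := vandermonde_rinv_exists (pchar_num (complex R)) n.+1.
exists (homog_part n phi W); split=> [j j_le_n|]; last exact: sum_homog_part.
split; first exact: homog_part_poly_le.
exact: homog_partMn.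
Qed.
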